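(* Fix $x_0\in\mathbb{R}^n$ and an integer $\ell\ge1$, and consider the following iteration (Kaczmarz method with affine search). For $k=0,1,2,\ldots$: set $d_k=P(x_k)-x_k$ and $\delta_k=\|d_k\|^2$; if $\delta_k=0$, terminate and return $x_k$; otherwise set $\rho_k=\|r(x_k)\|^2$, $\gamma_k=\frac12(\rho_k+\delta_k)$, $j_k=\max\{k-\ell+1,0\}$, $V_k=(x_{j_k}-x_k,\ldots,x_{k-1}-x_k)\in\mathbb{R}^{n\times(k-j_k)}$ (empty if $k=j_k$), $M_k=(V_k,d_k)\in\mathbb{R}^{n\times(k-j_k+1)}$, let $s_k$ solve $M_k^TM_ks_k=\gamma_ke_{k-j_k+1}$ (with $e_{k-j_k+1}$ the last unit vector of $\mathbb{R}^{k-j_k+1}$), and set $x_{k+1}=x_k+M_ks_k$. Let $x^*\in\mathbb{R}^n$ satisfy $Ax^*=b$. Then either the iteration terminates and returns some $x_k$ with $Ax_k=b$, or it generates a well-defined infinite sequence $(x_k)_k$ (i.e. every $M_k^TM_k$ is invertible) such that for all $k\in\mathbb{N}$: \[x_{k+1}=\operatorname{argmin}_{\xi\in\operatorname{aff}(x_{j_k},\ldots,x_k,P(x_k))}\|\xi-x^*\|^2,\qquad \|x_k-x^*\|^2-\|x_{k+1}-x^*\|^2=\gamma_k^2\frac{\det(V_k^TV_k)}{\det(M_k^TM_k)},\] and in particular $\|x_{k+1}-x^*\|^2\le\|P(x_k)-x^*\|^2$ for all $k$.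
   Context: Let $A=(a_1,\ldots,a_m)^T\in\mathbb{R}^{m\times n}$ with rows $a_j\in\mathbb{R}^n\setminus\{0\}$, and let $b\in\mathbb{R}^m$ lie in the range of $A$. Norms are Euclidean. For $j=1,\ldots,m$ define the projectors $P_j:\mathbb{R}^n\to\mathbb{R}^n$, $P_j(x)=\big(I-\frac{a_ja_j^T}{\|a_j\|^2}\big)x+\frac{b_j}{\|a_j\|^2}a_j$ (the orthogonal projection onto $\{z:a_j^Tz=b_j\}$), and the Kaczmarz cycle $P=P_m\circ\cdots\circ P_1$. The residual $r:\mathbb{R}^n\to\mathbb{R}^m$ is defined by $r_1(x)=(a_1^Tx-b_1)/\|a_1\|$ and $r_j(x)=(a_j^T(P_{j-1}\circ\cdots\circ P_1)(x)-b_j)/\|a_j\|$ for $j=2,\ldots,m$. $\operatorname{aff}(\cdot)$ denotes the affine hull. The determinant of an empty ($0\times0$) Gram matrix is taken to be $1$. *)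

(* Real numbers: an arbitrary real closed field R : rcfType
   (includes the reals; only field operations, order and sqrt are used). *)
From mathcomp Require Import all_boot all_order all_algebra.
Set Implicit Arguments. Unset Strict Implicit. Unset Printing Implicit Defensive.
Import Order.TTheory GRing.Theory Num.Theory.
Local Open Scope ring_scope.

Section Kaczmarz.
Variable R : rcfType.
Variables m n : nat.

Definition sqn (p : nat) (v : 'cV[R]_p) : R := (v^T *m v) 0 0.

(* a_j as a column vector (j-th row of A, 0-indexed) *)
Definition arow (A : 'M[R]_(m, n)) (j : 'I_m) : 'cV[R]_n := (row j A)^T.

(* orthogonal projection P_j onto {z | a_j^T z = b_j} *)
Definition projP (A : 'M[R]_(m, n)) (b : 'cV[R]_m) (j : 'I_m) (x : 'cV[R]_n)
  : 'cV[R]_n :=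
  let a := arow A j in
  (1%:M - (sqn a)^-1 *: (a *m a^T)) *m x + (b j 0 / sqn a) *: a.

(* P_k o ... o P_1 (first k projectors, applied in order P_1 first) *)
Definition Pcyc (A : 'M[R]_(m, n)) (b : 'cV[R]_m) (k : nat) (x : 'cV[R]_n)
  : 'cV[R]_n :=
  foldl (fun y j => projP A b j y) x (take k (enum 'I_m)).

Definition kaczP (A : 'M[R]_(m, n)) (b : 'cV[R]_m) (x : 'cV[R]_n) : 'cV[R]_n :=
  Pcyc A b m x.

Definition resid (A : 'M[R]_(m, n)) (b : 'cV[R]_m) (x : 'cV[R]_n) : 'cV[R]_m :=
  \col_(j < m) ((((arow A j)^T *m Pcyc A b j x) 0 0 - b j 0)
                  / Num.sqrt (sqn (arow A j))).

Definition jk (ell k : nat) : nat := k - (ell - 1).   (* = max(k-ell+1, 0) *)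

Definition dk A b (x : nat -> 'cV[R]_n) (k : nat) : 'cV[R]_n :=
  kaczP A b (x k) - x k.

Definition deltak A b (x : nat -> 'cV[R]_n) k : R := sqn (dk A b x k).

Definition rhok A b (x : nat -> 'cV[R]_n) k : R := sqn (resid A b (x k)).

Definition gammak A b (x : nat -> 'cV[R]_n) k : R :=
  (rhok A b x k + deltak A b x k) / 2.

Definition Vk (ell : nat) (x : nat -> 'cV[R]_n) (k : nat)
  : 'M[R]_(n, k - jk ell k) :=
  \matrix_(i < n, c < k - jk ell k) (x (jk ell k + c)%N - x k) i 0.

Definition Mk A b (ell : nat) (x : nat -> 'cV[R]_n) (k : nat)
  : 'M[R]_(n, k - jk ell k + 1) :=
  row_mx (Vk ell x k) (dk A b x k).

Definition elast (p : nat) : 'cV[R]_p :=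
  \col_(i < p) (if (i : nat) == p.-1 then 1 else 0).

Definition sk A b ell (x : nat -> 'cV[R]_n) k : 'cV[R]_(k - jk ell k + 1) :=
  invmx ((Mk A b ell x k)^T *m Mk A b ell x k)
    *m (gammak A b x k *: elast (k - jk ell k + 1)).

Definition next_iter A b ell (x : nat -> 'cV[R]_n) k : 'cV[R]_n :=
  x k + Mk A b ell x k *m sk A b ell x k.

Definition in_aff (pts : seq 'cV[R]_n) (v : 'cV[R]_n) : Prop :=
  exists lam : nat -> R,
    \sum_(i < size pts) lam i = 1 /\
    v = \sum_(i < size pts) lam i *: pts`_i.

Definition aff_pts A b ell (x : nat -> 'cV[R]_n) k : seq 'cV[R]_n :=
  rcons [seq x (jk ell k + c)%N | c <- iota 0 (k - jk ell k).+1]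
        (kaczP A b (x k)).

End Kaczmarz.

(* Every x* with A x* = b lies on all the hyperplanes, so Pythagoras for each
   projection of the cycle gives ||y - x*||^2 = ||P(y) - x*||^2 + ||r(y)||^2, and
   polarising, <P(y) - y, x* - y> = (||r(y)||^2 + ||P(y) - y||^2) / 2 = gamma.
   Hence the system defining s_k is the normal equation for projecting x* onto
   x_k + range M_k, provided x* - x_k is orthogonal to the columns of V_k.  By
   induction x_k is the orthogonal projection of x* onto the affine hull of the
   previous window, which gives that orthogonality and makes the successive
   increments of the iterates pairwise orthogonal, so that V_k has independent
   columns and M_k^T M_k is invertible.  The decrease of the error is
   <s_k, gamma e_last> = gamma * (s_k)_last, which the Schur complement of
   V_k^T V_k in M_k^T M_k expresses through the two Gram determinants. *)
From mathcomp Require Import all_boot all_order all_algebra.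
From mathcomp Require Import ring lra.
Set Implicit Arguments. Unset Strict Implicit. Unset Printing Implicit Defensive.
Import Order.TTheory GRing.Theory Num.Theory.
Local Open Scope ring_scope.

Section InnerProduct.
Variable R : rcfType.
Implicit Types p q : nat.

Definition dot p (u v : 'cV[R]_p) : R := (u^T *m v) 0 0.

Lemma dotE p (u v : 'cV[R]_p) : dot u v = \sum_i u i 0 * v i 0.
Proof. by rewrite /dot mxE; apply: eq_bigr => i _; rewrite mxE. Qed.

Lemma dotC p (u v : 'cV[R]_p) : dot u v = dot v u.
Proof. by rewrite !dotE; apply: eq_bigr => i _; rewrite mulrC. Qed.

Lemma dotDl p (u w v : 'cV[R]_p) : dot (u + w) v = dot u v + dot w v.
Proof. by rewrite !dotE -big_split; apply: eq_bigr => i _; rewrite mxE mulrDl. Qed.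

Lemma dotNl p (u v : 'cV[R]_p) : dot (- u) v = - dot u v.
Proof. by rewrite !dotE -sumrN; apply: eq_bigr => i _; rewrite mxE mulNr. Qed.

Lemma dotZl p a (u v : 'cV[R]_p) : dot (a *: u) v = a * dot u v.
Proof. by rewrite !dotE mulr_sumr; apply: eq_bigr => i _; rewrite mxE mulrA. Qed.

Lemma dot0l p (v : 'cV[R]_p) : dot 0 v = 0.
Proof. by rewrite dotE big1 // => i _; rewrite mxE mul0r. Qed.

Lemma dotBl p (u w v : 'cV[R]_p) : dot (u - w) v = dot u v - dot w v.
Proof. by rewrite dotDl dotNl. Qed.

Lemma dotDr p (u w v : 'cV[R]_p) : dot v (u + w) = dot v u + dot v w.
Proof. by rewrite ![dot v _]dotC dotDl. Qed.

Lemma dotNr p (u v : 'cV[R]_p) : dot v (- u) = - dot v u.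
Proof. by rewrite ![dot v _]dotC dotNl. Qed.

Lemma dotBr p (u w v : 'cV[R]_p) : dot v (u - w) = dot v u - dot v w.
Proof. by rewrite dotDr dotNr. Qed.

Lemma dotZr p a (u v : 'cV[R]_p) : dot v (a *: u) = a * dot v u.
Proof. by rewrite ![dot v _]dotC dotZl. Qed.

Lemma dot0r p (v : 'cV[R]_p) : dot v 0 = 0.
Proof. by rewrite dotC dot0l. Qed.

Lemma dot_suml p (I : finType) (F : I -> 'cV[R]_p) v :
  dot (\sum_i F i) v = \sum_i dot (F i) v.
Proof. by elim/big_rec2: _ => [|i y1 y2 _ <-]; rewrite ?dot0l ?dotDl. Qed.

Lemma dot_mulmxl p q (M : 'M[R]_(p, q)) s w : dot (M *m s) w = dot s (M^T *m w).
Proof. by rewrite /dot trmx_mul mulmxA. Qed.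

Lemma trmx_mul_col p q (M : 'M[R]_(p, q)) c w : (M^T *m w) c 0 = dot (col c M) w.
Proof. by rewrite dotE mxE; apply: eq_bigr => i _; rewrite !mxE. Qed.

Lemma dot_col_mx p q (u1 v1 : 'cV[R]_p) (u2 v2 : 'cV[R]_q) :
  dot (col_mx u1 u2) (col_mx v1 v2) = dot u1 v1 + dot u2 v2.
Proof. by rewrite /dot tr_col_mx mul_row_col mxE. Qed.

Lemma dot_mx11 (u v : 'cV[R]_1) : dot u v = u 0 0 * v 0 0.
Proof. by rewrite dotE big_ord1. Qed.

Lemma sqn_dot p (u : 'cV[R]_p) : sqn u = dot u u.
Proof. by []. Qed.

Lemma sqn_ge0 p (u : 'cV[R]_p) : 0 <= sqn u.
Proof. by rewrite sqn_dot dotE sumr_ge0 // => i _; rewrite -expr2 sqr_ge0. Qed.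

Lemma sqn_eq0 p (u : 'cV[R]_p) : (sqn u == 0) = (u == 0).
Proof.
apply/idP/idP => [|/eqP->]; last by rewrite sqn_dot dot0l.
rewrite sqn_dot dotE psumr_eq0 => [/allP u0|i _]; last by rewrite -expr2 sqr_ge0.
apply/eqP/matrixP => i j; rewrite ord1 mxE.
by have /u0 := mem_index_enum i; rewrite /= -expr2 sqrf_eq0 => /eqP.
Qed.

Lemma sqnN p (u : 'cV[R]_p) : sqn (- u) = sqn u.
Proof. by rewrite !sqn_dot dotNl dotNr opprK. Qed.

Lemma sqnD p (u v : 'cV[R]_p) : sqn (u + v) = sqn u + sqn v + dot u v *+ 2.
Proof. by rewrite !sqn_dot !dotDl !dotDr (dotC v u) mulr2n; lra. Qed.

Lemma sqnD_orth p (u v : 'cV[R]_p) : dot u v = 0 -> sqn (u + v) = sqn u + sqn v.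
Proof. by move=> uv0; rewrite sqnD uv0 mul0rn addr0. Qed.

End InnerProduct.

Section LeastSquares.
Variable R : rcfType.
Implicit Types p q : nat.

Lemma gram_unitmx p q (M : 'M[R]_(p, q)) :
  (forall c : 'cV[R]_q, M *m c = 0 -> c = 0) -> M^T *m M \in unitmx.
Proof.
move=> injM; rewrite -row_free_unit -kermx_eq0; apply/negPn/negP.
case/rowV0Pn => v /sub_kermxP vG; apply/negP; rewrite negbK.
have Gv : M^T *m M *m v^T = 0.
  by rewrite -[M^T *m M]trmxK trmx_mul trmxK -trmx_mul vG trmx0.
have : sqn (M *m v^T) = 0 by rewrite sqn_dot dot_mulmxl mulmxA Gv dot0r.
by move/eqP; rewrite sqn_eq0 => /eqP/injM v0; rewrite -[v]trmxK v0 trmx0.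
Qed.

Lemma det_block_schur p q (P : 'M[R]_p) (B : 'M[R]_(p, q)) C (D : 'M[R]_q) :
  P \in unitmx ->
  \det (block_mx P B C D) = \det P * \det (D - C *m invmx P *m B).
Proof.
move=> Pu.
have -> : block_mx P B C D =
    block_mx 1%:M 0 (C *m invmx P) 1%:M *m block_mx P B 0 (D - C *m invmx P *m B).
  rewrite mulmx_block !mul1mx !mul0mx ?mulmx0 !addr0 ?add0r.
  by rewrite -mulmxA mulVmx // mulmx1 (addrC (C *m invmx P *m B)) subrK.
by rewrite det_mulmx det_lblock det_ublock !det1 !mul1r.
Qed.

(* Pythagoras: the normal equation makes w - M s orthogonal to the range of M. *)
Lemma sqn_normal_eq p q (M : 'M[R]_(p, q)) w s :
  M^T *m M *m s = M^T *m w -> sqn w - sqn (w - M *m s) = dot s (M^T *m w).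
Proof.
move=> normal; set e := w - M *m s.
have orth : M^T *m e = 0 by rewrite mulmxBr mulmxA normal subrr.
have -> : w = e + M *m s by rewrite subrK.
rewrite sqnD_orth; last by rewrite dotC dot_mulmxl orth dot0r.
by rewrite addrAC subrr add0r mulmxDr orth add0r sqn_dot dot_mulmxl mulmxA.
Qed.

Lemma row_mx_inj p K (V : 'M[R]_(p, K)) (d w : 'cV[R]_p) :
  (forall c : 'cV[R]_K, V *m c = 0 -> c = 0) -> V^T *m w = 0 -> dot d w != 0 ->
  forall c : 'cV[R]_(K + 1), row_mx V d *m c = 0 -> c = 0.
Proof.
move=> injV Vw dw c; rewrite -[c]vsubmxK mul_row_col.
set c1 := usubmx c; set c2 := dsubmx c.
have -> : d *m c2 = c2 0 0 *: d by rewrite {1}[c2]mx11_scalar mul_mx_scalar.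
move=> Vd0; have c2_0 : c2 = 0.
  have := congr1 (fun v => dot v w) Vd0.
  rewrite dotDl dot_mulmxl Vw dot0r add0r dotZl dot0l => /eqP.
  rewrite mulf_eq0 (negbTE dw) orbF => /eqP c2E.
  by apply/matrixP => i j; rewrite !ord1 c2E mxE.
move: Vd0; rewrite c2_0 mxE scale0r addr0 => /injV ->.
by rewrite col_mx0.
Qed.

(* The Schur complement S of V^T V in the Gram matrix of (V, d) is a scalar;
   the normal equation gives S * s_last = g and det = det (V^T V) * S. *)
Lemma dot_schur_last p K (V : 'M[R]_(p, K)) (d : 'cV[R]_p) (g : R) s :
  V^T *m V \in unitmx -> (row_mx V d)^T *m row_mx V d \in unitmx ->
  (row_mx V d)^T *m row_mx V d *m s = col_mx 0 g%:M ->
  dot s (col_mx 0 g%:M) = g ^+ 2 * \det (V^T *m V)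
                            / \det ((row_mx V d)^T *m row_mx V d).
Proof.
move=> VVu Gu Gs.
have Gblock : (row_mx V d)^T *m row_mx V d
    = block_mx (V^T *m V) (V^T *m d) (d^T *m V) (d^T *m d).
  by rewrite tr_row_mx mul_col_row.
rewrite -[s]vsubmxK dot_col_mx dot0r add0r dot_mx11 [g%:M 0 0]mxE eqxx mulr1n.
set s1 := usubmx s; set s2 := dsubmx s.
have [e1 e2] : V^T *m V *m s1 + V^T *m d *m s2 = 0 /\
               d^T *m V *m s1 + d^T *m d *m s2 = g%:M.
  by apply: eq_col_mx; rewrite -mul_block_col -Gblock vsubmxK Gs.
have s1E : s1 = - (invmx (V^T *m V) *m (V^T *m d *m s2)).
  have VVs1 : V^T *m V *m s1 = - (V^T *m d *m s2).
    by apply/eqP; rewrite -addr_eq0 e1.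
  by rewrite -(mulKmx VVu s1) VVs1 mulmxN.
set S := d^T *m d - d^T *m V *m invmx (V^T *m V) *m (V^T *m d).
have Ss2 : S 0 0 * s2 0 0 = g.
  have : S *m s2 = g%:M by rewrite -e2 s1E /S mulmxBl mulmxN !mulmxA addrC.
  move/(congr1 (fun N : 'cV[R]_1 => N 0 0)).
  by rewrite /= [g%:M 0 0]mxE eqxx mulr1n mxE big_ord1.
have detG : \det ((row_mx V d)^T *m row_mx V d) = \det (V^T *m V) * S 0 0.
  by rewrite Gblock det_block_schur // det_mx11.
have : \det ((row_mx V d)^T *m row_mx V d) != 0 by rewrite -unitfE -unitmxE.
rewrite detG mulf_eq0 negb_or => /andP [VV0 S0].
by rewrite -Ss2; field; rewrite VV0 S0.
Qed.

Lemma scale_elast_col_mx K (g : R) : g *: elast R (K + 1) = col_mx 0 g%:M.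
Proof.
apply/matrixP => i j; rewrite ord1 mxE.
case: (split_ordP i) => i' ->; rewrite ?col_mxEu ?col_mxEd !mxE /= addn1 /=.
  by rewrite (ltn_eqF (ltn_ord i')) mulr0.
by rewrite ord1 /= addn0 eqxx mulr1.
Qed.

End LeastSquares.

Section AffineHull.
Variables (R : rcfType) (p : nat).
Implicit Types pts : seq 'cV[R]_p.

Lemma in_aff_shift pts i (mu : nat -> R) : (i < size pts)%N ->
  in_aff pts (pts`_i + \sum_(j < size pts) mu j *: (pts`_j - pts`_i)).
Proof.
move=> ilt; set S := \sum_(j < size pts) mu j.
have sum_at_i (V : zmodType) (F : nat -> V) :
    \sum_(j < size pts) (if (j : nat) == i then F j else 0) = F i.
  rewrite (bigD1 (Ordinal ilt)) //= eqxx big1 ?addr0 // => j /negbTE.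
  by rewrite -val_eqE /= => ->.
exists (fun j => mu j + (if j == i then 1 - S else 0)); split.
  by rewrite big_split /= -/S (sum_at_i _ (fun=> 1 - S)) addrC subrK.
rewrite (eq_bigr (fun j : 'I_(size pts) => mu j *: pts`_j - mu j *: pts`_i));
  last by move=> j _; rewrite scalerBr.
rewrite sumrB -scaler_suml -/S.
under [in RHS]eq_bigr => j _ do rewrite scalerDl.
rewrite big_split /=.
under [X in _ = _ + X]eq_bigr => j _ do
  rewrite (fun_if (fun a => a *: pts`_j)) scale0r.
rewrite (sum_at_i _ (fun j => (1 - S) *: pts`_j)) scalerBl scale1r.
by rewrite addrCA addrA.
Qed.

Lemma in_aff_nth pts i : (i < size pts)%N -> in_aff pts pts`_i.
Proof.
move=> ilt; have := in_aff_shift (fun=> 0) ilt.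
by rewrite big1 ?addr0 // => j _; rewrite scale0r.
Qed.

(* y need not lie in the affine hull. *)
Lemma in_aff_nearest pts y xs z :
  (forall i, (i < size pts)%N -> dot (pts`_i - y) (xs - y) = 0) ->
  in_aff pts z -> sqn (y - xs) <= sqn (z - xs).
Proof.
move=> orth [lam [lam1 ->]]; set xi := \sum_(i < _) _.
have xi_y : xi - y = \sum_(i < size pts) lam i *: (pts`_i - y).
  rewrite (eq_bigr (fun i : 'I_(size pts) => lam i *: pts`_i - lam i *: y));
    last by move=> i _; rewrite scalerBr.
  by rewrite sumrB -scaler_suml lam1 scale1r.
have xi_orth : dot (xi - y) (xs - y) = 0.
  by rewrite xi_y dot_suml big1 // => i _; rewrite dotZl orth ?mulr0.
have -> : xi - xs = (xi - y) + (y - xs) by rewrite addrA subrK.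
rewrite [in X in _ <= X]sqnD_orth; first by rewrite lerDr sqn_ge0.
by rewrite -[y - xs]opprB dotNr xi_orth oppr0.
Qed.

End AffineHull.

Section OrthogonalIncrements.
Variables (R : rcfType) (p : nat).
Implicit Types y : nat -> 'cV[R]_p.

Lemma dot_telescope_eq0 y w a N : (a <= N)%N ->
  (forall s, (a <= s < N)%N -> dot (y s - y s.+1) w = 0) ->
  dot (y a - y N) w = 0.
Proof.
elim: N => [|N IH]; first by rewrite leqn0 => /eqP -> _; rewrite subrr dot0l.
rewrite leq_eqVlt => /orP [/eqP -> _|]; first by rewrite subrr dot0l.
rewrite ltnS => aN incr.
have -> : y a - y N.+1 = (y a - y N) + (y N - y N.+1) by rewrite addrA subrK.
rewrite dotDl IH ?incr ?addr0 ?aN ?leqnn // => s /andP [s1 s2].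
by apply: incr; rewrite s1 ltnW.
Qed.

Lemma orth_increments_free K y :
  (forall s t, (s < t < K)%N -> dot (y s - y s.+1) (y t - y t.+1) = 0) ->
  (forall t, (t < K)%N -> y t != y t.+1) ->
  forall c : 'cV[R]_K, \sum_(t < K) c t 0 *: (y t - y K) = 0 -> c = 0.
Proof.
elim: K y => [|K IH] y orth nz c; first by move=> _; apply/matrixP => [[]].
rewrite big_ord_recl /=; set u0 := y 0%N - y 1%N => c0.
have tail_orth (a : nat) : (0 < a <= K.+1)%N -> dot (y a - y K.+1) u0 = 0.
  move=> /andP [a0 aK]; apply: dot_telescope_eq0 => // s /andP [aS sK].
  by rewrite dotC; apply: orth; rewrite sK (leq_trans a0).
have c00 : c 0 0 = 0.
  have := congr1 (fun v => dot v u0) c0.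
  rewrite dotDl dot_suml big1; last first.
    by move=> t _; rewrite dotZl tail_orth ?mulr0 // /bump /= add1n ltnS ltnW.
  have -> : y 0%N - y K.+1 = u0 + (y 1%N - y K.+1) by rewrite addrA subrK.
  rewrite addr0 dot0l dotZl dotDl tail_orth // addr0 -sqn_dot => /eqP.
  by rewrite mulf_eq0 sqn_eq0 subr_eq0 (negbTE (nz 0%N _)) // orbF => /eqP.
have c'0 : \col_(t < K) c (lift 0 t) 0 = 0.
  apply: (IH (fun t => y t.+1)) => [s t st|t tK|]; [exact: orth | exact: nz |].
  rewrite -[RHS]c0 c00 scale0r add0r.
  by apply: eq_bigr => t _; rewrite mxE.
apply/matrixP => i j; rewrite ord1 mxE.
case: (unliftP 0 i) => [i'|] ->; last by rewrite c00.
by have /matrixP/(_ i' 0) := c'0; rewrite !mxE.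
Qed.

End OrthogonalIncrements.

Section KaczmarzCycle.
Variables (R : rcfType) (m n : nat).
Variables (A : 'M[R]_(m, n)) (b : 'cV[R]_m) (xs : 'cV[R]_n).
Hypothesis rowA_neq0 : forall j : 'I_m, row j A != 0.
Hypothesis xs_sol : A *m xs = b.

Lemma mulmx_arow j (y : 'cV[R]_n) : (A *m y) j 0 = dot (arow A j) y.
Proof. by rewrite dotE mxE; apply: eq_bigr => i _; rewrite !mxE. Qed.

Lemma sqn_arow_gt0 j : 0 < sqn (arow A j).
Proof.
rewrite lt_def sqn_ge0 andbT sqn_eq0 /arow.
apply: contra (rowA_neq0 j) => /eqP a0; apply/eqP.
by rewrite -[row j A]trmxK a0; apply/matrixP => i k; rewrite !mxE.
Qed.

Lemma projPE j y : projP A b j y =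
  y - ((dot (arow A j) y - b j 0) / sqn (arow A j)) *: arow A j.
Proof.
rewrite /projP mulmxBl mul1mx -scalemxAl -mulmxA.
rewrite [(arow A j)^T *m y]mx11_scalar mul_mx_scalar -/(dot _ _).
rewrite scalerA -addrA; congr (_ + _).
by rewrite -!scaleNr -scalerDl; congr (_ *: _); rewrite mulrBl mulrC; ring.
Qed.

Lemma sqn_projP j y :
  sqn (y - xs) = sqn (projP A b j y - xs)
     + ((dot (arow A j) y - b j 0) / Num.sqrt (sqn (arow A j))) ^+ 2.
Proof.
have a_gt0 := sqn_arow_gt0 j.
rewrite projPE; set a := arow A j; set c := dot a y - b j 0.
have -> : y - c / sqn a *: a - xs = (y - xs) + (- (c / sqn a)) *: a.
  by rewrite scaleNr addrAC.
have ya : dot (y - xs) a = c by rewrite dotBl /c -xs_sol mulmx_arow !(dotC a).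
rewrite [sqn (_ + _ *: _)]sqnD [sqn (_ *: _)]sqn_dot dotZl !dotZr -sqn_dot ya.
by rewrite expr_div_n sqr_sqrtr ?ltW //; field; rewrite gt_eqF.
Qed.

Lemma Pcyc0 y : Pcyc A b 0 y = y.
Proof. by rewrite /Pcyc take0. Qed.

Lemma PcycS k (km : (k < m)%N) y :
  Pcyc A b k.+1 y = projP A b (Ordinal km) (Pcyc A b k y).
Proof.
rewrite /Pcyc (take_nth (Ordinal km)) ?size_enum_ord // foldl_rcons.
by rewrite (nth_ord_enum _ (Ordinal km) : nth _ _ k = _).
Qed.

Lemma sqn_Pcyc y k : (k <= m)%N ->
  sqn (y - xs) = sqn (Pcyc A b k y - xs)
     + \sum_(j < m | (j < k)%N) resid A b y j 0 ^+ 2.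
Proof.
elim: k => [_|k IH km]; first by rewrite Pcyc0 big_pred0 ?addr0.
rewrite IH ?(ltnW km) // (PcycS km) (sqn_projP (Ordinal km)) -addrA.
congr (_ + _); rewrite [in RHS](bigD1 (Ordinal km)) //= mxE /=; congr (_ + _).
by apply: eq_bigl => i; rewrite ltnS -val_eqE /= ltn_neqAle andbC.
Qed.

Lemma sqn_resid y : sqn (resid A b y) = sqn (y - xs) - sqn (kaczP A b y - xs).
Proof.
rewrite (sqn_Pcyc y (leqnn m)) /kaczP addrAC subrr add0r sqn_dot dotE.
by apply: eq_big => // i; rewrite ?ltn_ord // => _; rewrite expr2.
Qed.

Lemma dot_kaczP_step y : dot (kaczP A b y - y) (xs - y) =
  (sqn (resid A b y) + sqn (kaczP A b y - y)) / 2.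
Proof.
rewrite sqn_resid.
have -> : kaczP A b y - xs = (y - xs) + (kaczP A b y - y).
  by rewrite (addrC (y - xs)) addrA subrK.
by rewrite [sqn (y - xs + _)]sqnD -[xs - y]opprB dotNr (dotC (kaczP A b y - y))
  mulr2n; field.
Qed.

Lemma kaczP_fixed_sol y : kaczP A b y = y -> A *m y = b.
Proof.
move=> Py.
have r0 j : resid A b y j 0 = 0.
  have /eqP := sqn_resid y; rewrite Py subrr sqn_eq0 => /eqP ->.
  by rewrite mxE.
have Pcyc_fix k : (k <= m)%N -> Pcyc A b k y = y.
  elim: k => [|k IH km]; first by rewrite Pcyc0.
  have /eqP := r0 (Ordinal km); rewrite (PcycS km) mxE /= IH ?(ltnW km) // projPE.
  rewrite mulf_eq0 invr_eq0 sqrtr_eq0 leNgt sqn_arow_gt0 orbF => /eqP ->.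
  by rewrite mul0r scale0r subr0.
apply/matrixP => j k; rewrite ord1 mulmx_arow.
have /eqP := r0 j; rewrite mxE Pcyc_fix ?(ltnW (ltn_ord j)) //.
by rewrite mulf_eq0 invr_eq0 sqrtr_eq0 leNgt sqn_arow_gt0 orbF subr_eq0 => /eqP.
Qed.

End KaczmarzCycle.

Section Iteration.
Variables (R : rcfType) (m n : nat).
Variables (A : 'M[R]_(m, n)) (b : 'cV[R]_m) (ell : nat) (xs : 'cV[R]_n).
Variable x : nat -> 'cV[R]_n.
Hypothesis rowA_neq0 : forall j : 'I_m, row j A != 0.
Hypothesis xs_sol : A *m xs = b.
Hypothesis x_next : forall k, x k.+1 = next_iter A b ell x k.

Local Notation V := (Vk ell x).
Local Notation d := (dk A b x).
Local Notation M := (Mk A b ell x).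
Local Notation s := (sk A b ell x).
Local Notation gamma := (gammak A b x).
Local Notation delta := (deltak A b x).
Local Notation pts := (aff_pts A b ell x).

Lemma jkK k : (jk ell k + (k - jk ell k) = k)%N.
Proof. exact/subnKC/leq_subr. Qed.

Lemma leq_jk i k : (i <= k)%N -> (jk ell i <= jk ell k)%N.
Proof. by move=> ik; rewrite /jk leq_sub2r. Qed.

Lemma col_Vk k (c : 'I_(k - jk ell k)) : col c (V k) = x (jk ell k + c)%N - x k.
Proof. by apply/matrixP => i j; rewrite ord1 !mxE. Qed.

Lemma mul_Vk k (c : 'cV[R]_(k - jk ell k)) :
  V k *m c = \sum_(t < k - jk ell k) c t 0 *: (x (jk ell k + t)%N - x k).
Proof.
apply/matrixP => i j; rewrite ord1 !mxE summxE; apply: eq_bigr => t _.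
by rewrite !mxE mulrC.
Qed.

Lemma size_aff_pts k : size (pts k) = (k - jk ell k).+2.
Proof. by rewrite /aff_pts size_rcons size_map size_iota. Qed.

Lemma nth_aff_pts k i : (i <= k - jk ell k)%N -> (pts k)`_i = x (jk ell k + i)%N.
Proof.
move=> ik; rewrite /aff_pts nth_rcons size_map size_iota ltnS ik.
by rewrite (nth_map 0%N) ?size_iota ?ltnS // nth_iota ?ltnS // add0n.
Qed.

Lemma nth_aff_pts_last k : (pts k)`_(k - jk ell k).+1 = kaczP A b (x k).
Proof. by rewrite /aff_pts nth_rcons size_map size_iota ltnn eqxx. Qed.

Lemma gammak_gt0 k : delta k != 0 -> 0 < gamma k.
Proof.
move=> delta0; have := sqn_ge0 (resid A b (x k)).
have : 0 < delta k by rewrite lt_def delta0 sqn_ge0.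
by rewrite /gammak /rhok; lra.
Qed.

Lemma dot_dk k : dot (d k) (xs - x k) = gamma k.
Proof. exact: dot_kaczP_step. Qed.

Lemma next_in_aff k : in_aff (pts k) (x k.+1).
Proof.
set K := (k - jk ell k)%N.
pose mu i := if insub i is Some t then usubmx (s k) t 0
             else if i == K.+1 then dsubmx (s k) 0 0 else 0.
have ptsK : (pts k)`_K = x k by rewrite nth_aff_pts // jkK.
have ptsK1 := nth_aff_pts_last k; rewrite -/K in ptsK1.
have ptsV : \sum_(0 <= i < K) mu i *: ((pts k)`_i - x k) = V k *m usubmx (s k).
  rewrite mul_Vk big_mkord; apply: eq_bigr => t _.
  by rewrite /mu valK nth_aff_pts // ltnW.
suff -> : x k.+1 = (pts k)`_K
    + \sum_(i < size (pts k)) mu i *: ((pts k)`_i - (pts k)`_K).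
  by apply: in_aff_shift; rewrite size_aff_pts.
rewrite ptsK x_next /next_iter -[s k]vsubmxK /Mk mul_row_col; congr (_ + _).
rewrite -(big_mkord xpredT (fun i => mu i *: ((pts k)`_i - x k))) size_aff_pts.
set P := pts k in ptsK ptsK1 ptsV *; clearbody P.
rewrite !big_nat_recr //= ptsV ptsK ptsK1 subrr scaler0 addr0; congr (_ + _).
rewrite /mu insubF ?ltnNge ?leqnSn // eqxx.
by rewrite {1}[dsubmx (s k)]mx11_scalar mul_mx_scalar.
Qed.

(* The invariant: x_i is the orthogonal projection of xs onto an affine set
   containing x_(j_(i-1)), ..., x_i. *)
Definition window_orth i :=
  forall j, (jk ell i.-1 <= j <= i)%N -> dot (x j - x i) (xs - x i) = 0.

Section Step.
Variable k : nat.
Hypothesis delta_neq0 : delta k != 0.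
Hypothesis Vk_inj : forall c : 'cV[R]_(k - jk ell k), V k *m c = 0 -> c = 0.
Hypothesis Vk_orth : (V k)^T *m (xs - x k) = 0.

Lemma trMk_mul : (M k)^T *m (xs - x k) = col_mx 0 (gamma k)%:M.
Proof.
rewrite tr_row_mx mul_col_mx Vk_orth; congr col_mx.
by rewrite [LHS]mx11_scalar -/(dot _ _) dot_dk.
Qed.

Lemma gramMk_unit : (M k)^T *m M k \in unitmx.
Proof.
rewrite /Mk; apply/gram_unitmx/(row_mx_inj Vk_inj Vk_orth).
by rewrite dot_dk gt_eqF ?gammak_gt0.
Qed.

Lemma sk_normal_eq : (M k)^T *m M k *m s k = (M k)^T *m (xs - x k).
Proof. by rewrite /sk scale_elast_col_mx (mulKVmx gramMk_unit) trMk_mul. Qed.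

Lemma trMk_mul_next : (M k)^T *m (xs - x k.+1) = 0.
Proof.
rewrite x_next /next_iter opprD addrA mulmxBr (mulmxA (M k)^T) sk_normal_eq.
exact: subrr.
Qed.

Lemma next_neq : x k.+1 != x k.
Proof.
apply/eqP => xk1; have := trMk_mul_next; rewrite xk1 trMk_mul => /eqP.
rewrite col_mx_eq0 eqxx /= => /eqP/matrixP/(_ 0 0)/eqP.
by rewrite !mxE eqxx mulr1n gt_eqF ?gammak_gt0.
Qed.

Lemma dot_aff_pts_next i : (i < size (pts k))%N ->
  dot ((pts k)`_i - x k.+1) (xs - x k.+1) = 0.
Proof.
have [Vw dw] : (V k)^T *m (xs - x k.+1) = 0 /\ (d k)^T *m (xs - x k.+1) = 0.
  by move: trMk_mul_next; rewrite /Mk tr_row_mx mul_col_mx -col_mx0 => /eq_col_mx.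
have Ms_orth : dot (M k *m s k) (xs - x k.+1) = 0.
  by rewrite dot_mulmxl trMk_mul_next dot0r.
have -> : (pts k)`_i - x k.+1 = ((pts k)`_i - x k) - M k *m s k.
  by rewrite x_next /next_iter opprD addrA.
rewrite dotBl Ms_orth subr0 size_aff_pts ltnS leq_eqVlt => /orP [/eqP ->|].
  by rewrite nth_aff_pts_last /dot dw mxE.
rewrite ltnS leq_eqVlt => /orP [/eqP ->|ik].
  by rewrite nth_aff_pts // jkK subrr dot0l.
rewrite nth_aff_pts; last exact: ltnW.
by rewrite -(col_Vk (Ordinal ik)) -trmx_mul_col Vw mxE.
Qed.

Lemma next_nearest z : in_aff (pts k) z -> sqn (x k.+1 - xs) <= sqn (z - xs).
Proof. exact: in_aff_nearest dot_aff_pts_next. Qed.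

Lemma next_decrease :
  sqn (x k - xs) - sqn (x k.+1 - xs)
    = gamma k ^+ 2 * \det ((V k)^T *m V k) / \det ((M k)^T *m M k).
Proof.
have -> : x k.+1 - xs = - ((xs - x k) - M k *m s k).
  by rewrite x_next /next_iter !opprB addrCA addrA.
rewrite sqnN -sqnN opprB sqn_normal_eq ?sk_normal_eq // trMk_mul.
have Gs := sk_normal_eq; rewrite trMk_mul /Mk in Gs.
exact: dot_schur_last (gram_unitmx Vk_inj) gramMk_unit Gs.
Qed.

Lemma window_orth_next : window_orth k.+1.
Proof.
move=> j /andP [j1 j2] /=.
case: (ltngtP j k.+1) j2 => // [jk1 _ | -> _]; last by rewrite subrr dot0l.
have jK : (j - jk ell k <= k - jk ell k)%N by rewrite leq_sub2r // -ltnS.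
have := dot_aff_pts_next (i := j - jk ell k).
rewrite nth_aff_pts // subnKC //; apply.
by rewrite size_aff_pts ltnS leqW.
Qed.

End Step.

Lemma Vk_orth_of_window k : window_orth k -> (V k)^T *m (xs - x k) = 0.
Proof.
move=> wk; apply/matrixP => c j; rewrite ord1 trmx_mul_col col_Vk mxE; apply: wk.
rewrite (leq_trans (leq_jk (leq_pred k)) (leq_addr _ _)) /=.
by apply: ltnW; rewrite -[X in (_ < X)%N](jkK k) ltn_add2l.
Qed.

Lemma dot_increment_window i P : window_orth i ->
  (jk ell i.-1 <= P)%N -> (P < i)%N -> dot (x P - x P.+1) (xs - x i) = 0.
Proof.
move=> wi P1 P2.
have -> : x P - x P.+1 = (x P - x i) - (x P.+1 - x i) by rewrite opprB addrA subrK.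
have wP : (jk ell i.-1 <= P <= i)%N by rewrite P1 ltnW.
have wP1 : (jk ell i.-1 <= P.+1 <= i)%N by rewrite P2 andbT leqW.
by rewrite dotBl (wi _ wP) (wi _ wP1) subrr.
Qed.

Lemma dot_increments_eq0 k P Q : (forall i, (i <= k)%N -> window_orth i) ->
  (jk ell k <= P)%N -> (P < Q)%N -> (Q < k)%N ->
  dot (x P - x P.+1) (x Q - x Q.+1) = 0.
Proof.
move=> w P1 PQ Qk.
have jkP i : (i <= k)%N -> (jk ell i.-1 <= P)%N.
  by move=> ik; exact: leq_trans (leq_jk (leq_trans (leq_pred i) ik)) P1.
have -> : x Q - x Q.+1 = (xs - x Q.+1) - (xs - x Q).
  by rewrite opprB [RHS]addrC addrA subrK.
rewrite dotBr (dot_increment_window (w _ Qk) (jkP _ Qk) (leqW PQ)).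
by rewrite (dot_increment_window (w _ (ltnW Qk)) (jkP _ (ltnW Qk)) PQ) subrr.
Qed.

Lemma Vk_inj_of_windows k : (forall i, (i <= k)%N -> window_orth i) ->
  (forall i, (i < k)%N -> x i.+1 != x i) ->
  forall c : 'cV[R]_(k - jk ell k), V k *m c = 0 -> c = 0.
Proof.
move=> w neq c; rewrite mul_Vk => c0.
have jk_lt t : (t < k - jk ell k)%N -> (jk ell k + t < k)%N.
  by move=> tK; rewrite -[X in (_ < X)%N](jkK k) ltn_add2l.
apply: (orth_increments_free (y := fun t => x (jk ell k + t)%N)) => [s t|t tK|].
- move=> /andP [st tK]; rewrite !addnS.
  by apply: (dot_increments_eq0 w); rewrite ?leq_addr ?ltn_add2l ?jk_lt.
- by rewrite addnS eq_sym neq ?jk_lt.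
- by rewrite jkK.
Qed.

Lemma iter_invariant k : (forall i, (i < k)%N -> delta i != 0) ->
  (forall i, (i <= k)%N -> window_orth i) /\ (forall i, (i < k)%N -> x i.+1 != x i).
Proof.
elim: k => [_|k IH delta_neq0].
  split=> // i; rewrite leqn0 => /eqP -> j /andP [_].
  by rewrite leqn0 => /eqP ->; rewrite subrr dot0l.
have [w neq] := IH (fun i ik => delta_neq0 i (leqW ik)).
have Vk_inj := Vk_inj_of_windows w neq.
have Vk_orth := Vk_orth_of_window (w k (leqnn k)).
have delta_k := delta_neq0 k (ltnSn k).
split=> i; rewrite ?ltnS leq_eqVlt => /orP [/eqP -> | ik].
- exact: window_orth_next.
- exact: w.
- exact: next_neq.
- exact: neq.
Qed.

End Iteration.

Theorem theorem10 (R : rcfType) (m n : nat) (A : 'M[R]_(m, n)) (b : 'cV[R]_m)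
  (ell : nat) (x0 xstar : 'cV[R]_n) (x : nat -> 'cV[R]_n) :
  (forall j : 'I_m, row j A != 0) ->
  (exists z : 'cV[R]_n, A *m z = b) ->
  (0 < ell)%N ->
  x 0%N = x0 ->
  (forall k : nat, x k.+1 = next_iter A b ell x k) ->
  A *m xstar = b ->
  forall k : nat,
    (forall i : nat, (i < k)%N -> deltak A b x i != 0) ->
    (deltak A b x k = 0 -> A *m x k = b) /\
    (deltak A b x k != 0 ->
       ((Mk A b ell x k)^T *m Mk A b ell x k \in unitmx) /\
       in_aff (aff_pts A b ell x k) (x k.+1) /\
       (forall xi : 'cV[R]_n, in_aff (aff_pts A b ell x k) xi ->
          sqn (x k.+1 - xstar) <= sqn (xi - xstar)) /\
       sqn (x k - xstar) - sqn (x k.+1 - xstar)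
         = gammak A b x k ^+ 2 * \det ((Vk ell x k)^T *m Vk ell x k)
             / \det ((Mk A b ell x k)^T *m Mk A b ell x k) /\
       sqn (x k.+1 - xstar) <= sqn (kaczP A b (x k) - xstar)).
Proof.
move=> rowA_neq0 _ _ _ x_next xs_sol k delta_prev; split.
  move/eqP; rewrite /deltak /dk sqn_eq0 subr_eq0.
  by move=> /eqP/(kaczP_fixed_sol rowA_neq0 xs_sol).
move=> delta_k; have [w neq] := iter_invariant rowA_neq0 xs_sol x_next delta_prev.
have Vk_inj := Vk_inj_of_windows w neq.
have Vk_orth := Vk_orth_of_window (w k (leqnn k)).
have G_unit := gramMk_unit rowA_neq0 xs_sol delta_k Vk_inj Vk_orth.
have nearest := next_nearest rowA_neq0 xs_sol x_next delta_k Vk_inj Vk_orth.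
have decrease := next_decrease rowA_neq0 xs_sol x_next delta_k Vk_inj Vk_orth.
have in_aff_next := next_in_aff x_next k.
do 4!split=> //.
apply/nearest; rewrite -(nth_aff_pts_last A b ell x k).
by apply: in_aff_nth; rewrite size_aff_pts.
Qed.
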